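(* A dual-rail CNOT gate cannot be heralded with a single ancilla photon in the following sense. Let $N=5$, and for each $k=1,\dots,4$ let the input be the Fock state $|x_k,1\rangle$ (first four modes $x_k$, one photon in mode $5$) where $x_1=(1,0,1,0)$, $x_2=(1,0,0,1)$, $x_3=(0,1,1,0)$, $x_4=(0,1,0,1)$, and let the corresponding targets be $Q_1=a^\dagger_1a^\dagger_3$, $Q_2=a^\dagger_1a^\dagger_4$, $Q_3=a^\dagger_2a^\dagger_4$, $Q_4=a^\dagger_2a^\dagger_3$ (i.e. $|1,0,1,0\rangle\mapsto|1,0,1,0\rangle$, $|1,0,0,1\rangle\mapsto|1,0,0,1\rangle$, $|0,1,1,0\rangle\mapsto|0,1,0,1\rangle$, $|0,1,0,1\rangle\mapsto|0,1,1,0\rangle$). Then there is no complex $5\times5$ matrix $A$ and no $\gamma\in\mathbb{C}$ such that $\gamma G_k=Q_k$ for all $k=1,\dots,4$ simultaneously, where $G_k$ is the heralded polynomial for input $k$ with heralding pattern $(1)$ on mode $5$.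
   Context: Heralded linear-optical model. States with a fixed photon number are homogeneous polynomials in commuting variables $a^\dagger_1,\dots,a^\dagger_N$ applied to the vacuum. Given $N$ modes, an arbitrary complex $N\times N$ matrix $A$ (not required to be unitary), and a Fock input $\prod_{i=1}^N\frac{1}{\sqrt{n_i!}}(a^\dagger_{i,\mathrm{in}})^{n_i}|0\rangle$, the output is $F|0\rangle$ with $F=\prod_{i=1}^N\frac{1}{\sqrt{n_i!}}\big(\sum_{j=1}^N A_{i,j}a^\dagger_j\big)^{n_i}$. Heralding the last $M$ modes on the pattern $(m_1,\dots,m_M)$, $m=\sum_jm_j$, gives $G=\frac{1}{\prod_jm_j!}\,\frac{\partial^{m}F}{\partial(a^\dagger_{N-M+1})^{m_1}\cdots\partial(a^\dagger_N)^{m_M}}\Big|_{a^\dagger_{N-M+1}=\cdots=a^\dagger_N=0}$, a polynomial in $a^\dagger_1,\dots,a^\dagger_{N-M}$. A heralded gate requires a single matrix $A$ and a single common $\gamma$ to satisfy $\gamma G_k=Q_k$ for every input–output pair $k$. *)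

From HB Require Import structures.
From mathcomp Require Import all_boot all_order all_algebra.
From mathcomp Require Import mpoly.
Set Implicit Arguments. Unset Strict Implicit. Unset Printing Implicit Defensive.
Import Order.TTheory GRing.Theory Num.Theory.
Local Open Scope ring_scope.

Section Herald.
Variable C : numClosedFieldType.

(* Modes are 'I_(K + M): the first K (lshift) are kept, the last M (rshift)
   are heralded. Creation operators a^dagger_j are the variables 'X_j. *)

Definition lin_out (N : nat) (A : 'M[C]_N) (i : 'I_N) : {mpoly C[N]} :=
  \sum_(j < N) A i j *: 'X_j.

Definition out_poly (N : nat) (A : 'M[C]_N) (n : 'I_N -> nat) : {mpoly C[N]} :=
  \prod_(i < N) ((sqrtC (n i)`!%:R)^-1 *: (lin_out A i ^+ n i)).

Definition herald_subst (K M : nat) : (K + M).-tuple {mpoly C[K]} :=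
  [tuple match split j with inl i => 'X_i | inr _ => 0 end | j < K + M].

Definition herald (K M : nat) (m : 'I_M -> nat) (F : {mpoly C[K + M]})
  : {mpoly C[K]} :=
  let D := foldr (fun k p => iter (m k) (mderiv (rshift K k)) p) F (enum 'I_M) in
  ((\prod_(k < M) (m k)`!)%:R^-1 *: D) \mPo herald_subst K M.

Definition heralded_poly (K M : nat) (A : 'M[C]_(K + M)) (n : 'I_(K + M) -> nat)
  (m : 'I_M -> nat) : {mpoly C[K]} :=
  herald m (out_poly A n).

Definition cnot_x (k : 'I_4) : 4.-tuple nat :=
  nth [tuple 1%N; 0%N; 1%N; 0%N]
    [:: [tuple 1%N; 0%N; 1%N; 0%N]; [tuple 1%N; 0%N; 0%N; 1%N];
        [tuple 0%N; 1%N; 1%N; 0%N]; [tuple 0%N; 1%N; 0%N; 1%N]] k.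

Definition cnot_input (k : 'I_4) (j : 'I_(4 + 1)) : nat :=
  match split j with inl i => tnth (cnot_x k) i | inr _ => 1%N end.

Definition cnot_target (k : 'I_4) : {mpoly C[4]} :=
  nth 0 [:: 'X_0 * 'X_2; 'X_0 * 'X_3; 'X_1 * 'X_3; 'X_1 * 'X_2] k.

Definition one_photon : 'I_1 -> nat := fun _ => 1%N.

End Herald.

(* With one photon in each of the modes p, q and the ancilla mode h, and the
   herald detecting one photon in h, the heralded polynomial is
   G = l_h (A_ph l_q + A_qh l_p) + A_hh l_p l_q, where l_i is the linear form of
   row i of A on the kept modes.  In the 2x2 minor G_1 G_4 - G_2 G_3 of the four
   CNOT inputs the A_hh terms cancel, so gamma^2 l_h^2 M = Q_1 Q_4 - Q_2 Q_3
   = x_1 x_2 (x_3^2 - x_4^2) for a quadratic form M.  On the line (s, t, s, t) the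
   right-hand side is s^3 t - s t^3, which has no repeated linear factor, whereas
   the left-hand side is the square of a linear form times a quadratic form;
   comparing coefficients gives a contradiction. *)

From HB Require Import structures.
From mathcomp Require Import all_boot all_order all_algebra.
From mathcomp Require Import mpoly ring.
Set Implicit Arguments. Unset Strict Implicit. Unset Printing Implicit Defensive.
Import GRing.Theory Num.Theory.
Local Open Scope ring_scope.

Section BinaryForms.
Variable R : numDomainType.

Lemma binary_quartic_coefs (p0 p1 p2 p3 p4 q0 q1 q2 q3 q4 : R) :
  (forall s t, p0 * s ^+ 4 + p1 * s ^+ 3 * t + p2 * s ^+ 2 * t ^+ 2 + p3 * s * t ^+ 3 + p4 * t ^+ 4
             = q0 * s ^+ 4 + q1 * s ^+ 3 * t + q2 * s ^+ 2 * t ^+ 2 + q3 * s * t ^+ 3 + q4 * t ^+ 4) ->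
  [/\ p0 = q0, p1 = q1, p2 = q2, p3 = q3 & p4 = q4].
Proof.
move=> E.
pose F s t := p0 * s ^+ 4 + p1 * s ^+ 3 * t + p2 * s ^+ 2 * t ^+ 2 + p3 * s * t ^+ 3 + p4 * t ^+ 4
  - (q0 * s ^+ 4 + q1 * s ^+ 3 * t + q2 * s ^+ 2 * t ^+ 2 + q3 * s * t ^+ 3 + q4 * t ^+ 4).
have F0 s t : F s t = 0 by rewrite /F E subrr.
have sixK (x y : R) : 6 * (x - y) = 0 -> x = y.
  by move/eqP; rewrite mulf_eq0 pnatr_eq0 subr_eq0 => /eqP.
(* Solve the Vandermonde system given by the values at (1,0), (0,1), (1,1), (1,-1), (1,2). *)
split; apply: sixK.
- by transitivity (6 * F 1 0); [rewrite /F; ring | rewrite F0 mulr0].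
- transitivity (6 * F 1 1 - 2 * F 1 (-1) - F 1 2 - 3 * F 1 0 + 12 * F 0 1); first by rewrite /F; ring.
  by rewrite !F0; ring.
- transitivity (3 * F 1 1 + 3 * F 1 (-1) - 6 * F 1 0 - 6 * F 0 1); first by rewrite /F; ring.
  by rewrite !F0; ring.
- transitivity (F 1 2 + 3 * F 1 0 - 3 * F 1 1 - F 1 (-1) - 12 * F 0 1); first by rewrite /F; ring.
  by rewrite !F0; ring.
- by transitivity (6 * F 0 1); [rewrite /F; ring | rewrite F0 mulr0].
Qed.

Lemma no_square_linear_factor (g a m r0 r1 r2 : R) :
  ~ (forall s t, g * (s * a + t * m) ^+ 2 * (r0 * s ^+ 2 + r1 * s * t + r2 * t ^+ 2)
                 = s ^+ 3 * t - s * t ^+ 3).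
Proof.
move=> E.
have [p0E p1E p2E p3E p4E] : [/\ g * a ^+ 2 * r0 = 0, g * (a ^+ 2 * r1 + 2 * a * m * r0) = 1,
    g * (a ^+ 2 * r2 + 2 * a * m * r1 + m ^+ 2 * r0) = 0,
    g * (m ^+ 2 * r1 + 2 * a * m * r2) = -1 & g * m ^+ 2 * r2 = 0].
  apply: binary_quartic_coefs => s t.
  transitivity (g * (s * a + t * m) ^+ 2 * (r0 * s ^+ 2 + r1 * s * t + r2 * t ^+ 2)); first by ring.
  by rewrite E; ring.
(* With [p1 = 1] (see [p1E]), [r0 = r0 p1^2] is a multiple of [p0 = 0]; symmetrically for [r2]. *)
have r0E : r0 = 0.
  transitivity (r0 * (g * (a ^+ 2 * r1 + 2 * a * m * r0)) ^+ 2); first by rewrite p1E expr1n mulr1.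
  transitivity (g * (g * a ^+ 2 * r0) * (a * r1 + 2 * m * r0) ^+ 2); first by ring.
  by rewrite p0E mulr0 mul0r.
have r2E : r2 = 0.
  transitivity (r2 * (g * (m ^+ 2 * r1 + 2 * a * m * r2)) ^+ 2); first by rewrite p3E sqrrN expr1n mulr1.
  transitivity (g * (g * m ^+ 2 * r2) * (m * r1 + 2 * a * r2) ^+ 2); first by ring.
  by rewrite p4E mulr0 mul0r.
have : (g * (a ^+ 2 * r2 + 2 * a * m * r1 + m ^+ 2 * r0)) ^+ 2
       = 4 * (g * (a ^+ 2 * r1 + 2 * a * m * r0)) * (g * (m ^+ 2 * r1 + 2 * a * m * r2)).
  by rewrite r0E r2E; ring.
rewrite p1E p2E p3E expr0n mulr1 mulrN1 /= => /eqP.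
by rewrite eq_sym oppr_eq0 pnatr_eq0.
Qed.

End BinaryForms.

Section LinearOptics.
Variable C : numClosedFieldType.

Lemma mderiv_lin_out N (A : 'M[C]_N) i j : (lin_out A i)^`M(j) = (A i j)%:MP.
Proof.
rewrite /lin_out raddf_sum (bigD1 j) //= big1 => [|k /negPf kj].
  rewrite mderivZ mderivX mnm1E eqxx scale1r addr0.
  have -> : (U_(j) - U_(j) = 0)%MM by apply/mnmP => k; rewrite mnmBE mnm0E subnn.
  by rewrite mpolyX0 -mul_mpolyC mulr1.
by rewrite mderivZ mderivX mnm1E kj scale0r scaler0.
Qed.

Lemma out_poly_indicator N (A : 'M[C]_N) (n : 'I_N -> nat) (s : seq 'I_N) :
  uniq s -> (forall i, n i = (i \in s)) -> out_poly A n = \prod_(i <- s) lin_out A i.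
Proof.
move=> uniq_s nE; rewrite big_uniq // /out_poly (bigID (mem s)) /= [X in _ * X]big1 ?mulr1.
  by apply: eq_bigr => i si; rewrite nE si sqrtC1 invr1 scale1r.
by move=> i /negPf si; rewrite nE si sqrtC1 invr1 scale1r.
Qed.

Definition herald_mode (K : nat) : 'I_(K + 1) := rshift K ord0.

Lemma herald_one_photon K (F : {mpoly C[K + 1]}) :
  herald one_photon F = F^`M(herald_mode K) \mPo herald_subst C K 1.
Proof.
by rewrite /herald enum_ordSl enum_ord0 /= big_ord1 invr1 scale1r.
Qed.

Definition herald_point K (v : 'I_K -> C) (j : 'I_(K + 1)) : C :=
  if split j is inl i then v i else 0.

Lemma meval_herald_subst K (p : {mpoly C[K + 1]}) v :
  (p \mPo herald_subst C K 1).@[v] = p.@[herald_point v].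
Proof.
rewrite comp_mpoly_meval; apply: meval_eq => j.
by rewrite /herald_subst /herald_point tnth_mktuple; case: split => i; rewrite ?mevalXU ?meval0.
Qed.

Section Heralding.
Variables (K : nat) (A : 'M[C]_(K + 1)).
Local Notation h := (herald_mode K).

Definition lin_form (i : 'I_(K + 1)) (v : 'I_K -> C) : C :=
  \sum_(j < K) A i (lshift 1 j) * v j.

Lemma meval_lin_out i v : (lin_out A i).@[herald_point v] = lin_form i v.
Proof.
rewrite /lin_out raddf_sum big_split_ord /= big_ord1 mevalZ mevalXU.
rewrite /herald_point (unsplitK (inr _ _)) mulr0 addr0.
by apply: eq_bigr => j _; rewrite mevalZ mevalXU (unsplitK (inl _ _)).
Qed.

Definition pair_form (p q : 'I_(K + 1)) (v : 'I_K -> C) : C :=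
  A p h * lin_form q v + A q h * lin_form p v.

Definition heralded_amp (p q : 'I_(K + 1)) (v : 'I_K -> C) : C :=
  lin_form h v * pair_form p q v + A h h * lin_form p v * lin_form q v.

Lemma heralded_two_photons (p q : 'I_(K + 1)) (n : 'I_(K + 1) -> nat) v :
  uniq [:: p; q; h] -> (forall i, n i = (i \in [:: p; q; h])) ->
  (heralded_poly A n one_photon).@[v] = heralded_amp p q v.
Proof.
move=> uniq_pqh nE.
rewrite /heralded_poly herald_one_photon meval_herald_subst (out_poly_indicator _ uniq_pqh nE).
rewrite !big_cons big_nil mulr1 !mderivM !mderiv_lin_out !(mevalD, mevalM, mevalC, meval_lin_out).
by rewrite /heralded_amp /pair_form; ring.
Qed.

Definition amp_minor (p0 p1 q0 q1 : 'I_(K + 1)) (v : 'I_K -> C) : C :=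
  pair_form p0 q0 v * pair_form p1 q1 v - pair_form p0 q1 v * pair_form p1 q0 v.

Lemma heralded_amp_minor p0 p1 q0 q1 v :
  heralded_amp p0 q0 v * heralded_amp p1 q1 v - heralded_amp p0 q1 v * heralded_amp p1 q0 v
  = lin_form h v ^+ 2 * amp_minor p0 p1 q0 q1 v.
Proof. by rewrite /heralded_amp /amp_minor /pair_form; ring. Qed.

Section Line.
Variables (x y z : 'I_K -> C) (s t : C).
Hypothesis zE : forall j, z j = s * x j + t * y j.

Lemma lin_form_comb i : lin_form i z = s * lin_form i x + t * lin_form i y.
Proof.
by rewrite /lin_form !mulr_sumr -big_split; apply: eq_bigr => j _ /=; rewrite zE; ring.
Qed.

Lemma pair_form_comb p q : pair_form p q z = s * pair_form p q x + t * pair_form p q y.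
Proof. by rewrite /pair_form !lin_form_comb; ring. Qed.

End Line.

Lemma amp_minor_quadratic p0 p1 q0 q1 (x y : 'I_K -> C) (z : C -> C -> 'I_K -> C) :
    (forall s t j, z s t j = s * x j + t * y j) ->
  exists r0 r1 r2, forall s t,
    amp_minor p0 p1 q0 q1 (z s t) = r0 * s ^+ 2 + r1 * s * t + r2 * t ^+ 2.
Proof.
move=> zE; pose M := amp_minor p0 p1 q0 q1.
exists (M x), (M (z 1 1) - M x - M y), (M y) => s t.
by rewrite /M /amp_minor !(pair_form_comb (zE s t)) !(pair_form_comb (zE 1 1)); ring.
Qed.

End Heralding.
End LinearOptics.

(* Modes are numbered from 0: ['m_i] is mode i+1 of the paper. *)
Local Notation "''m_' i" := (@Ordinal (4 + 1) i isT) (at level 8, i at level 2, format "''m_' i").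

Section CNOT.
Variable C : numClosedFieldType.

Local Notation h := (herald_mode 4).

Definition cnot_modes (k : 'I_4) : seq 'I_(4 + 1) :=
  nth [::] [:: [:: 'm_0; 'm_2; h]; [:: 'm_0; 'm_3; h]; [:: 'm_1; 'm_2; h]; [:: 'm_1; 'm_3; h]] k.

Lemma cnot_inputE k i : cnot_input k i = (i \in cnot_modes k).
Proof.
rewrite /cnot_input; case: splitP => [j ij | j ij].
  have -> : i = lshift 1 j by apply: val_inj.
  by case: k => [[|[|[|[|//]]]] ?]; case: j {ij} => [[|[|[|[|//]]]] ?].
have -> : i = h by apply: val_inj; rewrite /= ij; case: j {ij} => [[]].
by case: k => [[|[|[|[|//]]]] ?].
Qed.

Definition cnot_line (s t : C) (j : 'I_4) : C := if odd j then t else s.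

Lemma cnot_line_comb s t j : cnot_line s t j = s * cnot_line 1 0 j + t * cnot_line 0 1 j.
Proof. by rewrite /cnot_line; case: odd; ring. Qed.

Lemma cnot_target_minor s t :
  (cnot_target C 0).@[cnot_line s t] * (cnot_target C 3).@[cnot_line s t]
  - (cnot_target C 1).@[cnot_line s t] * (cnot_target C 2).@[cnot_line s t]
  = s ^+ 3 * t - s * t ^+ 3.
Proof. by rewrite /cnot_target /= !mevalM !mevalXU /cnot_line /=; ring. Qed.

Lemma cnot_heralded_minor (A : 'M[C]_(4 + 1)) v :
  (heralded_poly A (cnot_input 0) one_photon).@[v] * (heralded_poly A (cnot_input 3) one_photon).@[v]
  - (heralded_poly A (cnot_input 1) one_photon).@[v] * (heralded_poly A (cnot_input 2) one_photon).@[v]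
  = lin_form A h v ^+ 2 * amp_minor A 'm_0 'm_1 'm_2 'm_3 v.
Proof.
rewrite (heralded_two_photons _ _ _ (cnot_inputE 0)) // (heralded_two_photons _ _ _ (cnot_inputE 3)) //.
rewrite (heralded_two_photons _ _ _ (cnot_inputE 1)) // (heralded_two_photons _ _ _ (cnot_inputE 2)) //.
exact: heralded_amp_minor.
Qed.

End CNOT.

Theorem mainTheorem5 (C : numClosedFieldType) :
  ~ exists (A : 'M[C]_(4 + 1)) (gamma : C),
      forall k : 'I_4,
        gamma *: heralded_poly A (cnot_input k) one_photon = cnot_target C k.
Proof.
move=> [A [g H]].
have E k s t : g * (heralded_poly A (cnot_input k) one_photon).@[cnot_line s t]
             = (cnot_target C k).@[cnot_line s t] by rewrite -mevalZ H.
have [r0 [r1 [r2 ME]]] := amp_minor_quadratic A 'm_0 'm_1 'm_2 'm_3 (@cnot_line_comb C).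
apply: (no_square_linear_factor (g := g ^+ 2) (a := lin_form A (herald_mode 4) (cnot_line 1 0))
  (m := lin_form A (herald_mode 4) (cnot_line 0 1)) (r0 := r0) (r1 := r1) (r2 := r2)) => s t.
rewrite -(lin_form_comb _ (cnot_line_comb s t)) -ME -mulrA -cnot_heralded_minor.
rewrite -cnot_target_minor -(E 0) -(E 1) -(E 2) -(E 3) mulrBr.
by congr (_ - _); rewrite expr2 mulrACA.
Qed.
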